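(* Let $s>1/2$ and for $w=\sum_{n\in\mathbb Z}w_ne_n\in H^s$ define $$N(w)=\Big(2w_0(\|w\|^2_H-|w_0|^2)+\bar w_0[w,w]\Big)e_0+\sum_{n\ne0}\Big(w_n(2\|w\|^2_H-|w_n|^2-2|w_{-n}|^2)+\bar w_{-n}[w,w]\Big)e_n.$$ Then $[N(w),\bar w]$ is real and $$[N(w),\bar w]\ge \|w\|^4_H.$$
   Context: $e_n(x)=e^{inx}$; $H=L^2_{per}(-\pi,\pi)$ (complex-valued, $2\pi$-periodic) with $\|w\|_H^2=\sum_n|w_n|^2$; $H^s$ is the periodic Sobolev space with $\|w\|_{H^s}^2=\sum_n(|n|^2+1)^s|w_n|^2$. For $w=\sum w_ne_n$, $v=\sum v_ne_n$, $[w,v]:=\sum_{n}w_nv_{-n}$; $\bar w=\sum_n\bar w_{-n}e_n$ is the complex conjugate function (so $[v,\bar w]=\sum_n v_n\bar w_n$ is the $H$-inner product). *)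

From HB Require Import structures.
From mathcomp Require Import all_boot all_order all_algebra.
From mathcomp Require Import all_classical all_reals all_analysis.
From mathcomp Require Import complex.
Set Implicit Arguments. Unset Strict Implicit. Unset Printing Implicit Defensive.
Import Order.TTheory GRing.Theory Num.Theory numFieldNormedType.Exports.
Local Open Scope ring_scope.

(* A function w : int -> R[i] is the Fourier coefficient sequence n |-> w_n
   of w = sum_n w_n e_n.  Sums over Z are limits of symmetric partial sums
   sum_{-N <= n <= N}; a complex sum is taken componentwise (Re / Im). *)

Section Defs.
Variable R : realType.
Local Notation C := (R[i]).

Definition psumZ (f : int -> C) (N : nat) : C :=
  \sum_(i < (2 * N).+1) f (i%:Z - N%:Z).
Definition rpsumZ (f : int -> R) (N : nat) : R :=
  \sum_(i < (2 * N).+1) f (i%:Z - N%:Z).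

Definition cvgZ (f : int -> C) : Prop :=
  cvgn (fun N => (complex.Re (psumZ f N) : R)) /\ cvgn (fun N => (complex.Im (psumZ f N) : R)).
Definition sumZ (f : int -> C) : C :=
  Complex (limn (fun N => (complex.Re (psumZ f N) : R)))
          (limn (fun N => (complex.Im (psumZ f N) : R))).

Definition abs2 (z : C) : R := complex.Re z ^+ 2 + complex.Im z ^+ 2.

Definition in_Hs (s : R) (w : int -> C) : Prop :=
  cvgn (rpsumZ (fun n => powR ((n%:~R : R) ^+ 2 + 1) s * abs2 (w n))).

Definition normH2 (w : int -> C) : R := limn (rpsumZ (fun n => abs2 (w n))).

Definition bracket (w v : int -> C) : C := sumZ (fun n => w n * v (- n)).

Definition bracket_cvg (w v : int -> C) : Prop := cvgZ (fun n => w n * v (- n)).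

Definition conjfun (w : int -> C) : int -> C := fun n => conjc (w (- n)).

Definition Nw (w : int -> C) : int -> C := fun n =>
  if n == 0 then
    (2%:R * w 0 * real_complex R (normH2 w - abs2 (w 0)) + conjc (w 0) * bracket w w)%R
  else
    (w n * real_complex R (2%:R * normH2 w - abs2 (w n) - 2%:R * abs2 (w (- n)))
       + conjc (w (- n)) * bracket w w)%R.

End Defs.

(* Write a_n = |w_n|^2 and pair the index n with -n.  The n-th term of
   [N(w), bar w] is 2 ||w||^2 a_n - q_n + conj(w_n w_(-n)) [w,w], where
   q_n = quartic w n >= 0, so
   [N(w), bar w] = 2 ||w||^4 - sum_n q_n + |[w,w]|^2, which is real.
   To the pair {k, -k} attach v_k = (a_k + a_(-k), 2 w_k w_(-k)) in R x C, and
   v_0 = (a_0, w_0^2).  Then sum_k v_k = (||w||^2, [w,w]), every v_k lies in the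
   cone {(x, z) : |z| <= x}, and q_k + q_(-k) <= |v_k|^2.  Two vectors of this
   cone have nonnegative inner product (Cauchy-Schwarz), so
   sum_n q_n <= sum_k |v_k|^2 <= |sum_k v_k|^2 = ||w||^4 + |[w,w]|^2. *)

From Pilot Require Import Defs.
From HB Require Import structures.
From mathcomp Require Import all_boot all_order all_algebra.
From mathcomp Require Import all_classical all_reals all_analysis.
From mathcomp Require Import complex.
From mathcomp Require Import zify ring lra.
Import Order.TTheory GRing.Theory Num.Theory numFieldNormedType.Exports.
Set Implicit Arguments. Unset Strict Implicit. Unset Printing Implicit Defensive.
Local Open Scope ring_scope.
Local Open Scope classical_set_scope.

Definition symfold (V : zmodType) (f : int -> V) (k : nat) : V :=
  if k is 0 then f 0 else f k%:Z + f (- k%:Z).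

Lemma sum_centered_symfold (V : zmodType) (f : int -> V) (N : nat) :
  \sum_(i < (2 * N).+1) f (i%:Z - N%:Z) = \sum_(k < N.+1) symfold f k.
Proof.
elim: N => [|N IH]; first by rewrite muln0 !big_ord1.
rewrite (_ : (2 * N.+1).+1 = (2 * N).+3) ?mulnS // big_ord_recr big_ord_recl.
rewrite [in RHS]big_ord_recr /= -IH (addrC (f _)) -addrA sub0r.
congr (_ + _); first by apply: eq_bigr => i _; congr f; rewrite /bump /=; lia.
by rewrite addrC; congr (f _ + _); rewrite /bump /=; lia.
Qed.

Section SymmetricSums.
Variable R : realType.
Implicit Types f g : int -> R.

Lemma rpsumZE f N : rpsumZ f N = series (symfold f) N.+1.
Proof. by rewrite /rpsumZ sum_centered_symfold /series /= big_mkord. Qed.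

Lemma cvgn_rpsumZ f : cvgn (rpsumZ f) <-> cvgn (series (symfold f)).
Proof.
have -> : rpsumZ f = [sequence series (symfold f) n.+1]_n.
  by apply/funext => N; rewrite rpsumZE.
by split=> /cvg_ex[l ul]; apply/cvg_ex; exists l; rewrite ?cvg_shiftS in ul *.
Qed.

Lemma rpsumZ_nondecreasing f : (forall n, 0 <= f n) -> nondecreasing_seq (rpsumZ f).
Proof.
move=> f_ge0; apply/nondecreasing_seqP => N; rewrite !rpsumZE.
by rewrite /series /= [X in _ <= X]big_nat_recr //= lerDl addr_ge0.
Qed.

Lemma rpsumZ_le_cvg f g : (forall n, 0 <= f n) -> (forall n, f n <= g n) ->
  cvgn (rpsumZ g) -> cvgn (rpsumZ f).
Proof.
move=> f_ge0 le_fg; rewrite !cvgn_rpsumZ => cg.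
have g_ge0 n : 0 <= g n by exact: le_trans (f_ge0 n) (le_fg n).
by apply: series_le_cvg cg => -[|k] /=; rewrite ?addr_ge0 ?lerD.
Qed.

Lemma rpsumZ_dominated_cvg f g : (forall k, `|symfold f k| <= symfold g k) ->
  cvgn (rpsumZ g) -> cvgn (rpsumZ f).
Proof.
move=> le_fg; rewrite !cvgn_rpsumZ => cg; apply: normed_cvg.
by apply: series_le_cvg cg => k /=; rewrite ?(le_trans _ (le_fg k)).
Qed.

End SymmetricSums.

Section ComplexSums.
Variable R : realType.
Implicit Type f : int -> R[i].

Lemma Re_psumZ f :
  (fun N => complex.Re (psumZ f N)) = rpsumZ (fun n => complex.Re (f n)).
Proof. by apply/funext => N; apply: (big_morph (@complex.Re R)) => // -[? ?] [? ?]. Qed.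

Lemma Im_psumZ f :
  (fun N => complex.Im (psumZ f N)) = rpsumZ (fun n => complex.Im (f n)).
Proof. by apply/funext => N; apply: (big_morph (@complex.Im R)) => // -[? ?] [? ?]. Qed.

Lemma Re_symfold f k :
  complex.Re (symfold f k) = symfold (fun n => complex.Re (f n)) k.
Proof. by case: k => //= k; case: (f _) (f _) => ? ? [? ?]. Qed.

Lemma Im_symfold f k :
  complex.Im (symfold f k) = symfold (fun n => complex.Im (f n)) k.
Proof. by case: k => //= k; case: (f _) (f _) => ? ? [? ?]. Qed.

Lemma Re_real_add_conjM (x : R) (u v : R[i]) :
  complex.Re (x%:C%C + conjc u * v) =
  x + (complex.Re u * complex.Re v + complex.Im u * complex.Im v).
Proof. by case: u v => ? ? [? ?] /=; ring. Qed.

Lemma Im_real_add_conjM (x : R) (u v : R[i]) :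
  complex.Im (x%:C%C + conjc u * v) =
  complex.Re u * complex.Im v - complex.Im u * complex.Re v.
Proof. by case: u v => ? ? [? ?] /=; ring. Qed.

Lemma cvgZ_sumZ f (l : R[i]) :
  (fun N => complex.Re (psumZ f N)) @ \oo --> complex.Re l ->
  (fun N => complex.Im (psumZ f N)) @ \oo --> complex.Im l ->
  Defs.cvgZ f /\ sumZ f = l.
Proof.
move=> ReE ImE; split; first by split; apply/cvg_ex; eexists; eassumption.
case: l ReE ImE => p q /= ReE ImE.
by rewrite /sumZ (cvg_lim (@norm_hausdorff _ _) ReE) (cvg_lim (@norm_hausdorff _ _) ImE).
Qed.

End ComplexSums.

Section Lightcone.
Variable R : realType.
Implicit Types (x y : R) (z u : R[i]).

Definition lightcone x z : bool := (0 <= x) && (abs2 z <= x ^+ 2).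

Lemma abs2_ge0 z : 0 <= abs2 z.
Proof. by rewrite addr_ge0 ?sqr_ge0. Qed.

Lemma abs2M z u : abs2 (z * u) = abs2 z * abs2 u.
Proof. by case: z u => a b [c d]; rewrite /abs2 /=; ring. Qed.

Lemma abs2D z u : abs2 (z + u) = abs2 z + abs2 u + 2 * complex.Re (z * conjc u).
Proof. by case: z u => a b [c d]; rewrite /abs2 /=; ring. Qed.

Lemma abs2_double z : abs2 (z + z) = 4 * abs2 z.
Proof. by case: z => a b; rewrite /abs2 /=; ring. Qed.

Lemma Re_le_lightcone x z : lightcone x z -> `|complex.Re z| <= x.
Proof.
case: z => a b /andP[x_ge0]; rewrite /abs2 /= => le_ab.
by rewrite ler_norml; apply/andP; split; nra.
Qed.

Lemma Im_le_lightcone x z : lightcone x z -> `|complex.Im z| <= x.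
Proof.
case: z => a b /andP[x_ge0]; rewrite /abs2 /= => le_ab.
by rewrite ler_norml; apply/andP; split; nra.
Qed.

(* [Re (z * conjc u)] is the inner product of z and u in R^2. *)
Lemma lightcone_dot x y z u : lightcone x z -> lightcone y u ->
  `|complex.Re (z * conjc u)| <= x * y.
Proof.
move=> /andP[x_ge0 zx] /andP[y_ge0 uy]; apply: Re_le_lightcone.
rewrite /lightcone mulr_ge0 //= abs2M exprMn ler_pM ?abs2_ge0 //.
by case: u uy => c d; rewrite /abs2 /= !sqrrN.
Qed.

Lemma lightconeD x y z u : lightcone x z -> lightcone y u ->
  lightcone (x + y) (z + u).
Proof.
move=> xz yu; have := lightcone_dot xz yu; rewrite ler_norml => /andP[_ le_dot].
move: xz yu => /andP[x_ge0 zx] /andP[y_ge0 uy].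
rewrite /lightcone addr_ge0 //= abs2D; nra.
Qed.

Lemma lightcone_sqrD x y z u : lightcone x z -> lightcone y u ->
  x ^+ 2 + abs2 z + (y ^+ 2 + abs2 u) <= (x + y) ^+ 2 + abs2 (z + u).
Proof.
move=> xz yu; have := lightcone_dot xz yu; rewrite ler_norml => /andP[le_dot _].
rewrite abs2D; nra.
Qed.

Lemma lightcone_sum (I : Type) (r : seq I) (F : I -> R) (G : I -> R[i]) :
  (forall i, lightcone (F i) (G i)) ->
  lightcone (\sum_(i <- r) F i) (\sum_(i <- r) G i).
Proof.
move=> FG; apply: (big_ind2 (fun x z => lightcone x z)) => [||i _]; last exact: FG.
  by rewrite /lightcone /abs2 /= expr0n /= addr0 lexx.
by move=> ? ? ? ?; apply: lightconeD.
Qed.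

Lemma lightcone_sum_sqr (I : Type) (r : seq I) (F : I -> R) (G : I -> R[i]) :
  (forall i, lightcone (F i) (G i)) ->
  \sum_(i <- r) (F i ^+ 2 + abs2 (G i)) <=
    (\sum_(i <- r) F i) ^+ 2 + abs2 (\sum_(i <- r) G i).
Proof.
move=> FG; elim: r => [|i r IH].
  by rewrite !big_nil /abs2 /= expr0n /= !addr0.
rewrite !big_cons; apply: le_trans _ (lightcone_sqrD (FG i) (lightcone_sum r FG)).
by rewrite lerD2l.
Qed.

End Lightcone.

Section Nonlinearity.
Variables (R : realType) (w : int -> R[i]).
Local Notation a := (fun n => abs2 (w n)).
Local Notation g := (fun n => w n * w (- n)).

Definition quartic (n : int) : R :=
  if n == 0 then 2 * a 0 ^+ 2 else a n ^+ 2 + 2 * a n * a (- n).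

Lemma quartic_ge0 n : 0 <= quartic n.
Proof.
by rewrite /quartic; case: ifP => _; rewrite ?addr_ge0 ?mulr_ge0 ?sqr_ge0 ?abs2_ge0.
Qed.

Lemma Nw_mul_conj n : Nw w n * conjc (w n) =
  (2 * normH2 w * a n - quartic n)%:C%C + conjc (g n) * bracket w w.
Proof.
rewrite /Nw /quartic; case: eqP => [->|_].
  by case: (w 0) (bracket w w) => p q [c d]; rewrite /abs2 /=; congr Complex; ring.
case: (w n) (w (- n)) (bracket w w) => p q [p' q'] [c d].
by rewrite /abs2 /=; congr Complex; ring.
Qed.

Lemma psumZ_Nw_conj N :
  psumZ (fun n => Nw w n * conjfun w (- n)) N =
  (2 * normH2 w * rpsumZ a N - rpsumZ quartic N)%:C%C
  + conjc (psumZ g N) * bracket w w.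
Proof.
rewrite /psumZ /rpsumZ mulr_sumr -sumrB raddf_sum rmorph_sum mulr_suml -big_split.
by apply: eq_bigr => i _; rewrite /conjfun opprK Nw_mul_conj.
Qed.

Lemma lightcone_symfold k : lightcone (symfold a k) (symfold g k).
Proof.
rewrite /lightcone; case: k => [|k] /=; first by rewrite abs2_ge0 oppr0 abs2M expr2 lexx.
rewrite addr_ge0 ?abs2_ge0 //= opprK [w (- _) * _]mulrC abs2_double abs2M.
by have := sqr_ge0 (a k.+1%:Z - a (- k.+1%:Z)); nra.
Qed.

Lemma symfold_quartic_le k :
  symfold quartic k <= symfold a k ^+ 2 + abs2 (symfold g k).
Proof.
case: k => [|k] /=; first by rewrite /quartic eqxx abs2M expr2; lra.
rewrite /quartic /= opprK [w (- _) * _]mulrC abs2_double abs2M.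
by have := abs2_ge0 (w k.+1%:Z); have := abs2_ge0 (w (- k.+1%:Z)); nra.
Qed.

Lemma lightcone_psumZ N : lightcone (rpsumZ a N) (psumZ g N).
Proof.
rewrite /rpsumZ /psumZ (sum_centered_symfold a) (sum_centered_symfold g).
by apply: lightcone_sum => k; exact: lightcone_symfold.
Qed.

Lemma rpsumZ_quartic_le N :
  rpsumZ quartic N <= rpsumZ a N ^+ 2 + abs2 (psumZ g N).
Proof.
rewrite /rpsumZ /psumZ sum_centered_symfold.
rewrite (sum_centered_symfold a) (sum_centered_symfold g).
apply: le_trans _ (lightcone_sum_sqr _ (fun k : 'I_N.+1 => lightcone_symfold k)).
by apply: ler_sum => k _; exact: symfold_quartic_le.
Qed.

End Nonlinearity.

Section Convergence.
Variables (R : realType) (w : int -> R[i]).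
Local Notation a := (fun n => abs2 (w n)).
Local Notation g := (fun n => w n * w (- n)).
Hypothesis cvg_normH2 : cvgn (rpsumZ a).

Lemma rpsumZ_le_normH2 N : rpsumZ a N <= normH2 w.
Proof.
have := rpsumZ_nondecreasing (fun n => abs2_ge0 (w n)).
by move/nondecreasing_cvgn_le; apply.
Qed.

Lemma bracket_self_cvg : bracket_cvg w w.
Proof.
rewrite /bracket_cvg /Defs.cvgZ Re_psumZ Im_psumZ.
split; apply: rpsumZ_dominated_cvg cvg_normH2 => k.
  by rewrite -Re_symfold Re_le_lightcone ?lightcone_symfold.
by rewrite -Im_symfold Im_le_lightcone ?lightcone_symfold.
Qed.

Lemma cvg_quartic : cvgn (rpsumZ (quartic w)).
Proof.
apply: nondecreasing_is_cvgn; first exact: rpsumZ_nondecreasing (quartic_ge0 w).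
exists (2 * normH2 w ^+ 2) => _ [N _ <-].
have /andP[SX_ge0 SB_le] := lightcone_psumZ w N.
have SX_le := rpsumZ_le_normH2 N.
by apply: le_trans (rpsumZ_quartic_le w N) _; nra.
Qed.

Lemma limn_quartic_le :
  limn (rpsumZ (quartic w)) <= normH2 w ^+ 2 + abs2 (bracket w w).
Proof.
have [cRe cIm] := bracket_self_cvg.
apply: (ler_cvg_to cvg_quartic); last exact: nearW (rpsumZ_quartic_le w).
by rewrite /abs2 !expr2; apply: cvgD; [apply: cvgM | apply: cvgD; apply: cvgM].
Qed.

Lemma Nw_bracket_eq : bracket_cvg (Nw w) (conjfun w) /\
  bracket (Nw w) (conjfun w) =
  (2 * normH2 w ^+ 2 - limn (rpsumZ (quartic w)))%:C%C
  + conjc (bracket w w) * bracket w w.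
Proof.
have [cRe cIm] := bracket_self_cvg.
have cSX : rpsumZ a @ \oo --> normH2 w := cvg_normH2.
apply: cvgZ_sumZ.
  under eq_fun do rewrite psumZ_Nw_conj Re_real_add_conjM.
  rewrite Re_real_add_conjM expr2 mulrA.
  apply: cvgD; first apply: cvgB; [apply: cvgM => //; exact: cvg_cst|exact: cvg_quartic|].
  by apply: cvgD; apply: cvgM => //; exact: cvg_cst.
under eq_fun do rewrite psumZ_Nw_conj Im_real_add_conjM.
rewrite Im_real_add_conjM.
by apply: cvgB; apply: cvgM => //; exact: cvg_cst.
Qed.

End Convergence.

Lemma in_Hs_cvg_normH2 (R : realType) (s : R) (w : int -> R[i]) :
  0 <= s -> in_Hs s w -> cvgn (rpsumZ (fun n => abs2 (w n))).
Proof.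
move=> s_ge0; apply: rpsumZ_le_cvg => n; first exact: abs2_ge0.
rewrite ler_peMl ?abs2_ge0 // -[leLHS](powRr0 (n%:~R ^+ 2 + 1)).
by rewrite ler_powR // lerDr sqr_ge0.
Qed.

Theorem lemma2p3 (R : realType) (s : R) (w : int -> R[i]) :
  1 / 2 < s -> in_Hs s w ->
  bracket_cvg (Nw w) (conjfun w) /\
  complex.Im (bracket (Nw w) (conjfun w)) = 0 /\
  normH2 w ^+ 2 <= complex.Re (bracket (Nw w) (conjfun w)).
Proof.
move=> s_gt hw; have cvg_normH2 : cvgn (rpsumZ (fun n => abs2 (w n))).
  by apply: in_Hs_cvg_normH2 hw; lra.
have [cvgN ->] := Nw_bracket_eq cvg_normH2.
have := limn_quartic_le cvg_normH2.
case: (bracket w w) => p q; rewrite /abs2 /= => quartic_le.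
by split=> //; split; [ring | nra].
Qed.
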